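(* Let $X_1,\ldots,X_n$ be independent Bernoulli random variables (each taking values in $\{0,1\}$), let $S=\sum_{i=1}^n X_i$, and let $Z$ be a Poisson random variable with mean $1$, independent of $S$. Assume that $S+Z$ has a unique mode $m_1$, and let $m_0$ be any mode of $S$. Then $$m_0\leq m_1\leq m_0+2.$$
   Context: A mode of a random variable $X$ taking values in $\{0,1,2,\ldots\}$ is any integer $m$ at which the probability mass function $k\mapsto \Pr(X=k)$ attains its maximum. The Bernoulli variables may have arbitrary (possibly different) success probabilities. *)

From Stdlib Require Import Reals List Arith.
Open Scope R_scope.

(* Law (pmf) of S = X_1 + ... + X_n where the X_i are independent
   Bernoulli variables with success probabilities listed in ps:
   P(S = k) computed by conditioning on the first variable. *)
Fixpoint bern_sum_pmf (ps : list R) (k : nat) : R :=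
  match ps with
  | nil => if Nat.eqb k 0 then 1 else 0
  | p :: ps' =>
      (1 - p) * bern_sum_pmf ps' k
      + p * match k with O => 0 | S k' => bern_sum_pmf ps' k' end
  end.

Definition poisson1_pmf (k : nat) : R := exp (-1) / INR (fact k).

Definition conv_pmf (f g : nat -> R) (k : nat) : R :=
  sum_f_R0 (fun j => f j * g (k - j)%nat) k.

Definition is_mode (f : nat -> R) (m : nat) : Prop :=
  forall k : nat, f k <= f m.

From Stdlib Require Import Reals List Arith Lra Lia Psatz.
Open Scope R_scope.

(* Let S = X_1 + ... + X_n with X_i ~ Bernoulli(p_i) independent, with mean
   mu = p_1 + ... + p_n, and Z ~ Poisson(1).  The proof locates both modes
   relative to mu:
     (a) a mode m0 of S satisfies  m0 - 1 <= mu <= m0 + 1;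
     (b) the unique mode m1 of S + Z satisfies  m1 - 2 < mu < m1;
   and the theorem follows by comparing the two.  For Y independent with a log-concave
   law f, let g be the law of S + Y and g_i the law with X_i left out, so that
   g = (1 - p_i) g_i + p_i g_i(. - 1).  Differentiating generating functions,
     sum_i p_i g_i(k) = (k+1) g(k+1) - (S + Y')(k),
   where Y' has "law" (j+1) f(j+1).  Each g_i is log-concave, so where g
   decreases p_i g(k+1) <= p_i g_i(k), and where g increases
   (1 - p_i) g(k) <= (1 - p_i) g_i(k); summing over i bounds mu.  For Y = 0 the
   term Y' vanishes, while for Y = Poisson(1) we have Y' = Y, which shifts (b)
   by one with respect to (a).  Zero values of the laws are handled by
   counting the p_i equal to 0 or to 1. *)

Definition shift (f : nat -> R) (k : nat) : R :=
  match k with O => 0 | S k' => f k' end.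

Definition bern_step (p : R) (f : nat -> R) (k : nat) : R :=
  (1 - p) * f k + p * shift f k.

Fixpoint bern_conv (ps : list R) (f : nat -> R) : nat -> R :=
  match ps with nil => f | p :: ps' => bern_step p (bern_conv ps' f) end.

Definition dirac0 (k : nat) : R := if Nat.eqb k 0 then 1 else 0.

Definition is_prob (p : R) : Prop := 0 <= p <= 1.

Definition mean (ps : list R) : R := fold_right Rplus 0 ps.

Lemma bern_sum_pmf_eq ps k : bern_sum_pmf ps k = bern_conv ps dirac0 k.
Proof.
  revert k; induction ps as [|p ps IH]; intro k; simpl; [reflexivity|].
  unfold bern_step, shift. rewrite IH. destruct k; [reflexivity| now rewrite IH].
Qed.

Lemma bern_step_ext p f g : (forall k, f k = g k) -> forall k, bern_step p f k = bern_step p g k.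
Proof. intros H k. unfold bern_step, shift. destruct k; now rewrite !H. Qed.

Lemma bern_conv_ext ps f g : (forall k, f k = g k) -> forall k, bern_conv ps f k = bern_conv ps g k.
Proof.
  revert f g; induction ps as [|p ps IH]; intros f g H k; simpl; [apply H|].
  apply bern_step_ext. intro; now apply IH.
Qed.

Lemma bern_conv_zero ps k : bern_conv ps (fun _ => 0) k = 0.
Proof.
  revert k; induction ps as [|p ps IH]; intro k; simpl; [reflexivity|].
  unfold bern_step, shift. destruct k; rewrite !IH; ring.
Qed.

Lemma bern_step_comm p q f k : bern_step p (bern_step q f) k = bern_step q (bern_step p f) k.
Proof. unfold bern_step, shift. destruct k; ring. Qed.

Lemma shift_nonneg f : (forall k, 0 <= f k) -> forall k, 0 <= shift f k.
Proof. intros H [|k]; simpl; [lra| apply H]. Qed.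

Lemma bern_step_nonneg p f : is_prob p -> (forall k, 0 <= f k) -> forall k, 0 <= bern_step p f k.
Proof.
  intros Hp Hf k. unfold bern_step, is_prob in *.
  pose proof (Hf k). pose proof (shift_nonneg f Hf k). nra.
Qed.

Lemma bern_conv_nonneg ps f : Forall is_prob ps -> (forall k, 0 <= f k) ->
  forall k, 0 <= bern_conv ps f k.
Proof.
  induction 1 as [|p ps Hp _ IH]; intros Hf; simpl; [exact Hf|].
  apply bern_step_nonneg; auto.
Qed.

(* Nonnegative and log-concave without internal zeros, in the form
   f(i-1) f(j+1) <= f(i) f(j) for all i <= j (with f(-1) = 0). *)
Definition log_concave (f : nat -> R) : Prop :=
  (forall k, 0 <= f k) /\
  (forall i j, (i <= j)%nat -> shift f i * f (S j) <= f i * f j).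

Lemma log_concave_no_dip a m : log_concave a -> a m < shift a m -> a (S m) <= a m.
Proof.
  intros [Hn Hlc] H. pose proof (Hlc m m (le_n m)). pose proof (Hn m). nra.
Qed.

Lemma log_concave_strict_rise a m : log_concave a -> 0 < a m -> a m < a (S m) -> shift a m < a m.
Proof.
  intros [Hn Hlc] Hpos Hrise. pose proof (Hlc m m (le_n m)).
  pose proof (shift_nonneg a Hn m). nra.
Qed.

Lemma log_concave_gap2 a i j : log_concave a -> (i <= j)%nat ->
  shift a i * a (S (S j)) <= a (S i) * a j.
Proof.
  intros [Hn Hlc] Hij.
  pose proof (Hlc i (S j) ltac:(lia)) as Hfar.
  destruct (Nat.eq_dec i j) as [->|Hne]; [lra|].
  pose proof (Hlc (S i) j ltac:(lia)) as Hnear. simpl shift in Hnear. lra.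
Qed.

Lemma bern_step_log_concave p a : is_prob p -> log_concave a -> log_concave (bern_step p a).
Proof.
  intros Hp Ha. pose proof Ha as [Hn Hlc].
  split; [now apply bern_step_nonneg|].
  assert (Gn := bern_step_nonneg p a Hp Hn).
  intros [|i] j Hij.
  - simpl. pose proof (Gn 0%nat). pose proof (Gn j). nra.
  - destruct j as [|j]; [lia|]. destruct Hp as [Hp0 Hp1].
    unfold bern_step. simpl shift.
    assert (L11 := Hlc (S i) (S j) ltac:(lia)). simpl shift in L11.
    assert (L00 := Hlc i j ltac:(lia)).
    assert (L02 := log_concave_gap2 a i j Ha ltac:(lia)).
    set (P := shift a i) in *.
    assert (Hsplit :
      (1 - p) * a (S i) * ((1 - p) * a (S j) + p * a j) + p * a i * ((1 - p) * a (S j) + p * a j)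
      - ((1 - p) * a i + p * P) * ((1 - p) * a (S (S j)) + p * a (S j))
      = (1 - p) * (1 - p) * (a (S i) * a (S j) - a i * a (S (S j)))
        + p * (1 - p) * (a (S i) * a j - P * a (S (S j)))
        + p * p * (a i * a j - P * a (S j))) by ring.
    assert (0 <= (1 - p) * (1 - p) * (a (S i) * a (S j) - a i * a (S (S j)))
        + p * (1 - p) * (a (S i) * a j - P * a (S (S j)))
        + p * p * (a i * a j - P * a (S j))).
    { repeat apply Rplus_le_le_0_compat; apply Rmult_le_pos; nra. }
    lra.
Qed.

Lemma bern_conv_log_concave ps f : Forall is_prob ps -> log_concave f -> log_concave (bern_conv ps f).
Proof. induction 1; intros Hf; simpl; [exact Hf| apply bern_step_log_concave; auto]. Qed.
Definition sum_list {A : Type} (L : list A) (F : A -> R) : R :=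
  fold_right (fun x acc => F x + acc) 0 L.

Lemma sum_list_map {A B : Type} (h : A -> B) L F :
  sum_list (map h L) F = sum_list L (fun x => F (h x)).
Proof. induction L as [|x L IH]; simpl; [reflexivity|]. unfold sum_list in *; simpl; now rewrite IH. Qed.

Lemma sum_list_ext {A : Type} (L : list A) F G :
  (forall x, In x L -> F x = G x) -> sum_list L F = sum_list L G.
Proof.
  induction L as [|x L IH]; intros H; simpl; [reflexivity|]. unfold sum_list in *; simpl.
  rewrite (H x (or_introl eq_refl)), IH; auto. intros; apply H; now right.
Qed.

Lemma sum_list_le {A : Type} (L : list A) F G :
  (forall x, In x L -> F x <= G x) -> sum_list L F <= sum_list L G.
Proof.
  induction L as [|x L IH]; intros H; simpl; [unfold sum_list; simpl; lra|]. unfold sum_list in *; simpl.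
  apply Rplus_le_compat; [apply H; now left| apply IH; intros; apply H; now right].
Qed.

Lemma sum_list_lin {A : Type} (L : list A) a b F G :
  sum_list L (fun x => a * F x + b * G x) = a * sum_list L F + b * sum_list L G.
Proof. induction L as [|x L IH]; unfold sum_list in *; simpl; [ring|]. rewrite IH. ring. Qed.

Lemma sum_list_mul_r {A : Type} (L : list A) F C :
  sum_list L (fun x => F x * C) = sum_list L F * C.
Proof. induction L as [|x L IH]; unfold sum_list in *; simpl; [ring|]. rewrite IH. ring. Qed.

Lemma sum_list_compl_mul_r {A : Type} (L : list A) F C :
  sum_list L (fun x => (1 - F x) * C) = (INR (length L) - sum_list L F) * C.
Proof.
  induction L as [|x L IH]; unfold sum_list in *; cbn [length fold_right]; [simpl; ring|].
  rewrite IH, S_INR. ring.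
Qed.

Lemma sum_list_const {A : Type} (L : list A) C : sum_list L (fun _ => C) = INR (length L) * C.
Proof.
  induction L as [|x L IH]; unfold sum_list in *; cbn [length fold_right]; [simpl; ring|].
  rewrite IH, S_INR. ring.
Qed.

(* The list of pairs (p_i, law of the sum with X_i left out, plus Y ~ f). *)
Fixpoint leave_one_out (ps : list R) (f : nat -> R) : list (R * (nat -> R)) :=
  match ps with
  | nil => nil
  | p :: ps' => (p, bern_conv ps' f)
      :: map (fun pa => (fst pa, bern_step p (snd pa))) (leave_one_out ps' f)
  end.

Lemma leave_one_out_length ps f : length (leave_one_out ps f) = length ps.
Proof. induction ps as [|p ps IH]; simpl; [reflexivity|]. now rewrite length_map, IH. Qed.

Lemma leave_one_out_mean ps f : sum_list (leave_one_out ps f) fst = mean ps.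
Proof.
  induction ps as [|p ps IH]; [reflexivity|]. cbn [leave_one_out].
  change (p + sum_list (map (fun pa => (fst pa, bern_step p (snd pa))) (leave_one_out ps f)) fst
          = p + mean ps).
  rewrite sum_list_map. f_equal. exact IH.
Qed.

Lemma leave_one_out_step ps f pa : In pa (leave_one_out ps f) ->
  forall k, bern_conv ps f k = bern_step (fst pa) (snd pa) k.
Proof.
  revert pa; induction ps as [|p ps IH]; intros pa Hin k; simpl in Hin; [contradiction|].
  destruct Hin as [<-|Hin]; [reflexivity|].
  apply in_map_iff in Hin. destruct Hin as [x [<- Hx]]. simpl.
  rewrite (bern_step_ext p _ _ (IH x Hx)). apply bern_step_comm.
Qed.

Lemma leave_one_out_log_concave ps f : Forall is_prob ps -> log_concave f ->
  forall pa, In pa (leave_one_out ps f) -> is_prob (fst pa) /\ log_concave (snd pa).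
Proof.
  intros Hb Hf. induction Hb as [|p ps Hp Hb IH]; intros pa Hin; simpl in Hin; [contradiction|].
  destruct Hin as [<-|Hin]; [split; [exact Hp| now apply bern_conv_log_concave]|].
  apply in_map_iff in Hin. destruct Hin as [x [<- Hx]]. simpl.
  destruct (IH x Hx). split; [assumption| now apply bern_step_log_concave].
Qed.

(* The pmf of the derivative of the generating function: j |-> (j+1) f(j+1). *)
Definition pmf_deriv (f : nat -> R) (j : nat) : R := (INR j + 1) * f (S j).

(* sum_i p_i g_i(k) = (k+1) g(k+1) - (S + Y')(k): differentiate the product of
   generating functions, the derivative of the factor (1 - p + p x) being p. *)
Lemma leave_one_out_weighted ps f k :
  sum_list (leave_one_out ps f) (fun pa => fst pa * snd pa k)
  = (INR k + 1) * bern_conv ps f (S k) - bern_conv ps (pmf_deriv f) k.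
Proof.
  revert k; induction ps as [|p ps IH]; intro k.
  - unfold pmf_deriv, sum_list. simpl. ring.
  - cbn [leave_one_out bern_conv].
    change (sum_list (_ :: ?L) ?F) with (F (p, bern_conv ps f) + sum_list L F).
    rewrite sum_list_map. cbn [fst snd].
    rewrite (sum_list_ext _ _ (fun pa => (1 - p) * (fst pa * snd pa k)
                                      + p * (fst pa * shift (snd pa) k)))
      by (intros; unfold bern_step; ring).
    rewrite sum_list_lin. unfold bern_step.
    destruct k as [|k]; simpl shift.
    + rewrite sum_list_mul_r, IH. simpl INR. ring.
    + rewrite !IH, S_INR. ring.
Qed.

Lemma leave_one_out_coweighted ps f k :
  sum_list (leave_one_out ps f) (fun pa => (1 - fst pa) * snd pa k)
  = (INR (length ps) - INR k) * bern_conv ps f k + shift (bern_conv ps (pmf_deriv f)) k.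
Proof.
  rewrite (sum_list_ext _ _ (fun pa => 1 * bern_conv ps f k + (-1) * (fst pa * shift (snd pa) k))).
  2:{ intros pa Hin. rewrite (leave_one_out_step ps f pa Hin k). unfold bern_step. ring. }
  rewrite sum_list_lin, sum_list_const, leave_one_out_length.
  destruct k as [|k]; simpl shift.
  - rewrite sum_list_mul_r. simpl INR. ring.
  - rewrite leave_one_out_weighted, S_INR. ring.
Qed.

Lemma bern_step_decrease p a m : is_prob p -> log_concave a ->
  bern_step p a (S m) <= bern_step p a m -> p * bern_step p a (S m) <= p * a m.
Proof.
  intros [Hp0 Hp1] Ha H. unfold bern_step in *. simpl shift in *.
  assert ((1 - p) * (a (S m) - a m) <= 0).
  { destruct (Rle_lt_dec (shift a m) (a m)) as [Hle|Hlt]; [nra|].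
    pose proof (log_concave_no_dip a m Ha Hlt). nra. }
  nra.
Qed.

Lemma bern_step_increase p a m : is_prob p -> log_concave a ->
  bern_step p a m <= bern_step p a (S m) -> (1 - p) * bern_step p a m <= (1 - p) * a m.
Proof.
  intros [Hp0 Hp1] Ha H. unfold bern_step in *. simpl shift in *.
  assert (p * (shift a m - a m) <= 0).
  { destruct (Rle_lt_dec (shift a m) (a m)) as [Hle|Hlt]; [nra|].
    pose proof (log_concave_no_dip a m Ha Hlt). nra. }
  nra.
Qed.

Lemma mean_upper_of_decrease ps f m : Forall is_prob ps -> log_concave f ->
  bern_conv ps f (S m) <= bern_conv ps f m ->
  mean ps * bern_conv ps f (S m) + bern_conv ps (pmf_deriv f) m <= (INR m + 1) * bern_conv ps f (S m).
Proof.
  intros Hb Hf H.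
  assert (mean ps * bern_conv ps f (S m) <= sum_list (leave_one_out ps f) (fun pa => fst pa * snd pa m)).
  { rewrite <- (leave_one_out_mean ps f), <- sum_list_mul_r. apply sum_list_le. intros pa Hin.
    destruct (leave_one_out_log_concave ps f Hb Hf pa Hin) as [Hp Ha].
    rewrite !(leave_one_out_step ps f pa Hin) in *. now apply bern_step_decrease. }
  rewrite leave_one_out_weighted in H0. lra.
Qed.

Lemma mean_lower_of_increase ps f m : Forall is_prob ps -> log_concave f ->
  bern_conv ps f m <= bern_conv ps f (S m) ->
  (INR m - mean ps) * bern_conv ps f m <= shift (bern_conv ps (pmf_deriv f)) m.
Proof.
  intros Hb Hf H.
  assert ((INR (length ps) - mean ps) * bern_conv ps f m
          <= sum_list (leave_one_out ps f) (fun pa => (1 - fst pa) * snd pa m)).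
  { rewrite <- (leave_one_out_length ps f), <- (leave_one_out_mean ps f), <- sum_list_compl_mul_r.
    apply sum_list_le. intros pa Hin.
    destruct (leave_one_out_log_concave ps f Hb Hf pa Hin) as [Hp Ha].
    rewrite !(leave_one_out_step ps f pa Hin) in *. now apply bern_step_increase. }
  rewrite leave_one_out_coweighted in H0. lra.
Qed.

Fixpoint count_ones (ps : list R) : nat :=
  match ps with
  | nil => O
  | p :: ps' => if Req_EM_T p 1 then S (count_ones ps') else count_ones ps'
  end.

Fixpoint count_nonzero (ps : list R) : nat :=
  match ps with
  | nil => O
  | p :: ps' => if Req_EM_T p 0 then count_nonzero ps' else S (count_nonzero ps')
  end.

Lemma count_ones_le_mean ps : Forall is_prob ps -> INR (count_ones ps) <= mean ps.
Proof.
  induction 1 as [|p ps [Hp0 Hp1] _ IH]; simpl; [lra|].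
  destruct (Req_EM_T p 1); [rewrite S_INR|]; lra.
Qed.

Lemma mean_le_count_nonzero ps : Forall is_prob ps -> mean ps <= INR (count_nonzero ps).
Proof.
  induction 1 as [|p ps [Hp0 Hp1] _ IH]; simpl; [lra|].
  destruct (Req_EM_T p 0); [|rewrite S_INR]; lra.
Qed.

Lemma rise_from_zero_below_ones ps f : Forall is_prob ps -> (forall k, 0 <= f k) ->
  (forall k, f k = 0 -> f (S k) = 0) ->
  forall k, bern_conv ps f k = 0 -> 0 < bern_conv ps f (S k) -> (k < count_ones ps)%nat.
Proof.
  intros Hb Hf Hz. induction Hb as [|p ps [Hp0 Hp1] Hb IH]; intros k H0 H1; simpl in *.
  - rewrite (Hz k H0) in H1. lra.
  - pose proof (bern_conv_nonneg ps f Hb Hf) as Gn.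
    unfold bern_step in *. simpl shift in H1.
    destruct (Req_EM_T p 1) as [->|Hne].
    + destruct k as [|k]; [lia|]. simpl shift in H0.
      assert (k < count_ones ps)%nat by (apply IH; lra). lia.
    + pose proof (Gn k). pose proof (shift_nonneg _ Gn k).
      assert (Hk : bern_conv ps f k = 0) by nra.
      apply IH; [exact Hk|]. rewrite Hk in H1. nra.
Qed.

Lemma drop_to_zero_above_support ps f : Forall is_prob ps -> (forall k, 0 <= f k) ->
  forall k, bern_conv ps f (S k) = 0 -> 0 < bern_conv ps f k -> (count_nonzero ps <= k)%nat.
Proof.
  intros Hb Hf. induction Hb as [|p ps [Hp0 Hp1] Hb IH]; intros k H0 H1; simpl in *; [lia|].
  pose proof (bern_conv_nonneg ps f Hb Hf) as Gn.
  unfold bern_step in *. simpl shift in H0.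
  destruct (Req_EM_T p 0) as [->|Hne].
  - apply IH; lra.
  - pose proof (Gn k). pose proof (Gn (S k)).
    assert (Hk : bern_conv ps f k = 0) by nra.
    destruct k as [|k]; simpl shift in H1; rewrite Hk in H1; [lra|].
    assert (count_nonzero ps <= k)%nat by (apply IH; [exact Hk| nra]). lia.
Qed.

Lemma bern_conv_somewhere_positive ps f : Forall is_prob ps -> (forall k, 0 <= f k) ->
  (exists k, 0 < f k) -> exists k, 0 < bern_conv ps f k.
Proof.
  intros Hb Hf He. induction Hb as [|p ps [Hp0 Hp1] Hb IH]; simpl; [exact He|].
  destruct IH as [k Hk]. pose proof (bern_conv_nonneg ps f Hb Hf) as Gn.
  unfold bern_step. destruct (Req_EM_T p 1) as [->|Hne].
  - exists (S k). simpl shift. pose proof (Gn (S k)). nra.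
  - exists k. pose proof (shift_nonneg _ Gn k). nra.
Qed.

Lemma dirac0_log_concave : log_concave dirac0.
Proof.
  assert (Hn : forall k, 0 <= dirac0 k) by (intro k; unfold dirac0; destruct (Nat.eqb k 0); lra).
  split; [exact Hn|]. intros i j _. change (dirac0 (S j)) with 0.
  pose proof (Hn i); pose proof (Hn j); pose proof (shift_nonneg dirac0 Hn i). nra.
Qed.

Lemma dirac0_deriv k : pmf_deriv dirac0 k = 0.
Proof. unfold pmf_deriv. change (dirac0 (S k)) with 0. ring. Qed.

Lemma poisson1_pos k : 0 < poisson1_pmf k.
Proof. unfold poisson1_pmf. apply Rdiv_lt_0_compat; [apply exp_pos| apply INR_fact_lt_0]. Qed.

Lemma poisson1_succ k : poisson1_pmf (S k) = poisson1_pmf k / INR (S k).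
Proof.
  unfold poisson1_pmf. rewrite fact_simpl, mult_INR.
  pose proof (INR_fact_lt_0 k). assert (0 < INR (S k)) by (apply lt_0_INR; lia).
  field. lra.
Qed.

Lemma poisson1_log_concave : log_concave poisson1_pmf.
Proof.
  split; [intro k; left; apply poisson1_pos|].
  intros [|i] j Hij; simpl shift.
  - pose proof (poisson1_pos 0). pose proof (poisson1_pos j). nra.
  - destruct j as [|j]; [lia|].
    rewrite (poisson1_succ (S j)), (poisson1_succ i).
    pose proof (poisson1_pos i). pose proof (poisson1_pos (S j)).
    assert (0 < INR (S i)) by (apply lt_0_INR; lia).
    assert (INR (S i) <= INR (S (S j))) by (apply le_INR; lia).
    assert (/ INR (S (S j)) <= / INR (S i)) by (apply Rinv_le_contravar; lra).
    unfold Rdiv. assert (0 <= poisson1_pmf i * poisson1_pmf (S j)) by nra. nra.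
Qed.

Lemma poisson1_deriv k : pmf_deriv poisson1_pmf k = poisson1_pmf k.
Proof.
  unfold pmf_deriv. rewrite poisson1_succ, S_INR. pose proof (pos_INR k). field. lra.
Qed.

Lemma sum_f_R0_first F n : (forall j, (0 < j)%nat -> F j = 0) -> sum_f_R0 F n = F 0%nat.
Proof. intro H. induction n as [|n IH]; simpl; [reflexivity|]. rewrite IH, (H (S n)); [ring|lia]. Qed.

Lemma conv_pmf_ext f f' g k : (forall j, f j = f' j) -> conv_pmf f g k = conv_pmf f' g k.
Proof. intro H. unfold conv_pmf. apply sum_eq. intros j _. now rewrite H. Qed.

Lemma conv_pmf_dirac0 g k : conv_pmf dirac0 g k = g k.
Proof.
  unfold conv_pmf. rewrite sum_f_R0_first.
  - unfold dirac0. simpl. rewrite Nat.sub_0_r. ring.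
  - intros [|j] Hj; [lia|]. unfold dirac0. simpl. ring.
Qed.

Lemma conv_pmf_shift a g k : conv_pmf (shift a) g k = shift (conv_pmf a g) k.
Proof.
  unfold conv_pmf. destruct k as [|k]; [simpl; ring|].
  rewrite (decomp_sum _ (S k)) by lia. simpl. rewrite Rmult_0_l, Rplus_0_l. reflexivity.
Qed.

Lemma conv_pmf_bern_step p a g k : conv_pmf (bern_step p a) g k = bern_step p (conv_pmf a g) k.
Proof.
  unfold bern_step. rewrite <- conv_pmf_shift. unfold conv_pmf.
  rewrite (sum_eq _ (fun j => a j * g (k - j)%nat * (1 - p) + shift a j * g (k - j)%nat * p))
    by (intros; ring).
  rewrite sum_plus, <- !scal_sum. ring.
Qed.

Lemma conv_pmf_bern_conv ps g k : conv_pmf (bern_conv ps dirac0) g k = bern_conv ps g k.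
Proof.
  revert k; induction ps as [|p ps IH]; intro k; simpl; [apply conv_pmf_dirac0|].
  rewrite conv_pmf_bern_step. now apply bern_step_ext.
Qed.

Lemma is_mode_ext f g m : (forall k, f k = g k) -> is_mode f m -> is_mode g m.
Proof. intros H Hm k. rewrite <- !H. apply Hm. Qed.

Lemma unique_mode_right f m : is_mode f m -> (forall m', is_mode f m' -> m' = m) -> f (S m) < f m.
Proof.
  intros Hm Hu. destruct (Rlt_dec (f (S m)) (f m)) as [H|H]; [exact H|].
  assert (S m = m); [|lia]. apply Hu. intro k. pose proof (Hm k). lra.
Qed.

Lemma unique_mode_left f m : is_mode f (S m) -> (forall m', is_mode f m' -> m' = S m) -> f m < f (S m).
Proof.
  intros Hm Hu. destruct (Rlt_dec (f m) (f (S m))) as [H|H]; [exact H|].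
  assert (m = S m); [|lia]. apply Hu. intro k. pose proof (Hm k). lra.
Qed.

Lemma bern_mode_pos ps m0 : Forall is_prob ps -> is_mode (bern_conv ps dirac0) m0 ->
  0 < bern_conv ps dirac0 m0.
Proof.
  intros Hb Hm. destruct (bern_conv_somewhere_positive ps dirac0 Hb (proj1 dirac0_log_concave))
    as [k Hk]; [exists 0%nat; unfold dirac0; simpl; lra|].
  pose proof (Hm k). lra.
Qed.

Lemma bern_mode_upper ps m0 : Forall is_prob ps -> is_mode (bern_conv ps dirac0) m0 ->
  mean ps <= INR m0 + 1.
Proof.
  intros Hb Hm. set (b := bern_conv ps dirac0).
  pose proof (mean_upper_of_decrease ps dirac0 m0 Hb dirac0_log_concave (Hm (S m0))) as U.
  rewrite (bern_conv_ext ps _ _ dirac0_deriv), bern_conv_zero in U. fold b in U.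
  assert (0 <= b (S m0)) by apply (bern_conv_nonneg ps dirac0 Hb (proj1 dirac0_log_concave)).
  destruct (Rlt_dec 0 (b (S m0))) as [Hpos|Hzero]; [nra|].
  pose proof (drop_to_zero_above_support ps dirac0 Hb (proj1 dirac0_log_concave) m0
                ltac:(fold b; lra) (bern_mode_pos ps m0 Hb Hm)) as Hsupp.
  apply le_INR in Hsupp. pose proof (mean_le_count_nonzero ps Hb). lra.
Qed.

Lemma bern_mode_lower ps m : Forall is_prob ps -> is_mode (bern_conv ps dirac0) (S m) ->
  INR m <= mean ps.
Proof.
  intros Hb Hm. set (b := bern_conv ps dirac0).
  pose proof (mean_lower_of_increase ps dirac0 m Hb dirac0_log_concave (Hm m)) as L.
  replace (shift (bern_conv ps (pmf_deriv dirac0)) m) with 0 in L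
    by (destruct m; simpl; [reflexivity| now rewrite (bern_conv_ext ps _ _ dirac0_deriv), bern_conv_zero]).
  fold b in L.
  assert (0 <= b m) by apply (bern_conv_nonneg ps dirac0 Hb (proj1 dirac0_log_concave)).
  destruct (Rlt_dec 0 (b m)) as [Hpos|Hzero]; [nra|].
  assert (Hz : forall k, dirac0 k = 0 -> dirac0 (S k) = 0) by reflexivity.
  pose proof (rise_from_zero_below_ones ps dirac0 Hb (proj1 dirac0_log_concave) Hz m
                ltac:(fold b; lra) (bern_mode_pos ps (S m) Hb Hm)) as Hones.
  apply lt_INR in Hones. pose proof (count_ones_le_mean ps Hb). lra.
Qed.

Lemma poisson_decrease_mean ps m : Forall is_prob ps ->
  bern_conv ps poisson1_pmf (S m) < bern_conv ps poisson1_pmf m -> mean ps < INR m.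
Proof.
  intros Hb H. set (c := bern_conv ps poisson1_pmf) in *.
  pose proof (mean_upper_of_decrease ps poisson1_pmf m Hb poisson1_log_concave (Rlt_le _ _ H)) as U.
  rewrite (bern_conv_ext ps _ _ poisson1_deriv) in U. fold c in U.
  assert (0 <= c (S m)) by apply (bern_conv_nonneg ps poisson1_pmf Hb (proj1 poisson1_log_concave)).
  assert (Hpos : 0 < c (S m)).
  { destruct (Req_dec (c (S m)) 0) as [Hz|Hnz]; [rewrite Hz in U, H; lra| lra]. }
  nra.
Qed.

Lemma poisson_increase_mean ps m : Forall is_prob ps ->
  bern_conv ps poisson1_pmf m < bern_conv ps poisson1_pmf (S m) -> INR m - 1 < mean ps.
Proof.
  intros Hb H. set (c := bern_conv ps poisson1_pmf) in *.
  pose proof (bern_conv_log_concave ps poisson1_pmf Hb poisson1_log_concave) as Hlc.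
  pose proof (mean_lower_of_increase ps poisson1_pmf m Hb poisson1_log_concave (Rlt_le _ _ H)) as L.
  replace (shift (bern_conv ps (pmf_deriv poisson1_pmf)) m) with (shift c m) in L
    by (destruct m; simpl; [reflexivity| symmetry; apply bern_conv_ext, poisson1_deriv]).
  fold c in L. assert (0 <= c m) by apply (proj1 Hlc).
  destruct (Rlt_dec 0 (c m)) as [Hpos|Hzero].
  - pose proof (log_concave_strict_rise c m Hlc Hpos H). nra.
  - assert (Hz : forall k, poisson1_pmf k = 0 -> poisson1_pmf (S k) = 0)
      by (intros k Hk; pose proof (poisson1_pos k); lra).
    pose proof (rise_from_zero_below_ones ps poisson1_pmf Hb (proj1 poisson1_log_concave) Hz m
                  ltac:(fold c; lra) ltac:(fold c; lra)) as Hones.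
    apply lt_INR in Hones. pose proof (count_ones_le_mean ps Hb). lra.
Qed.

Theorem proposition1 (ps : list R)
  (hps : Forall (fun p => 0 <= p <= 1) ps)
  (m0 m1 : nat)
  (hm1 : is_mode (conv_pmf (bern_sum_pmf ps) poisson1_pmf) m1)
  (huniq : forall m : nat,
      is_mode (conv_pmf (bern_sum_pmf ps) poisson1_pmf) m -> m = m1)
  (hm0 : is_mode (bern_sum_pmf ps) m0) :
  (m0 <= m1 <= m0 + 2)%nat.
Proof.
  assert (Hc : forall k, conv_pmf (bern_sum_pmf ps) poisson1_pmf k = bern_conv ps poisson1_pmf k).
  { intro k. rewrite (conv_pmf_ext _ _ _ _ (bern_sum_pmf_eq ps)). apply conv_pmf_bern_conv. }
  assert (Hb0 : is_mode (bern_conv ps dirac0) m0) by exact (is_mode_ext _ _ _ (bern_sum_pmf_eq ps) hm0).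
  assert (Hmu_m1 : mean ps < INR m1).
  { apply poisson_decrease_mean; [exact hps|]. rewrite <- !Hc. now apply unique_mode_right. }
  split.
  - destruct m0 as [|m]; [lia|].
    pose proof (bern_mode_lower ps m hps Hb0). apply INR_lt. lra.
  - destruct m1 as [|m]; [lia|].
    assert (Hrise : bern_conv ps poisson1_pmf m < bern_conv ps poisson1_pmf (S m)).
    { rewrite <- !Hc. now apply unique_mode_left. }
    pose proof (poisson_increase_mean ps m hps Hrise).
    pose proof (bern_mode_upper ps m0 hps Hb0).
    assert (Hlt : INR m < INR (m0 + 2)) by (rewrite plus_INR; simpl; lra).
    apply INR_lt in Hlt. lia.
Qed.
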